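(* Fix a context $s$ of a contextual bandit with finite action set $\mathcal{A}$, a policy $\pi_{\mathrm{old}}(\cdot\mid s)$ with full support, a reward $r(s,\cdot)$ that is not constant on $\mathcal{A}$, a constant $\delta(s)>0$ and $\epsilon\in(0,1)$. Let $A(a)=r(s,a)-\mathbb{E}_{a'\sim\pi_{\mathrm{old}}}[r(s,a')]$ and, for $\bar{\pi}(\cdot\mid s)\in\Delta(\mathcal{A})$ with $\rho(a)=\bar{\pi}(a\mid s)/\pi_{\mathrm{old}}(a\mid s)$, $$\mathfrak{D}^{\mathrm{GSPO}}_{\pi_{\mathrm{old}}}(\bar{\pi}\mid s)=\mathbb{E}_{a\sim\pi_{\mathrm{old}}}\Big[\rho(a)A(a)-\min\Big(\frac{\rho(a)A(a)}{\delta(s)},\frac{\mathrm{clip}(\rho(a),1\pm\epsilon)A(a)}{\delta(s)}\Big)\Big].$$ Then $\mathfrak{D}^{\mathrm{GSPO}}_{\pi_{\mathrm{old}}}(\bar{\pi}\mid s)\ge0$ for all $\bar{\pi}(\cdot\mid s)\in\Delta(\mathcal{A})$ if and only if $\delta(s)=1$. Consequently, the drift is nonnegative at every context for all such policies if and only if $\delta\equiv1$.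
   Context: This is the drift functional induced by a PPO-style clipped objective with group-variance-normalized advantages $A/\delta(s)$ (as in GSPO), where $\delta(s)$ is the (positive) standard deviation of rewards in the group sampled for context $s$, treated as a fixed positive number. $\mathrm{clip}(x,1\pm\epsilon)=\min(\max(x,1-\epsilon),1+\epsilon)$. *)

From mathcomp Require Import all_boot all_order all_algebra.
Set Implicit Arguments. Unset Strict Implicit. Unset Printing Implicit Defensive.
Import Order.TTheory GRing.Theory Num.Theory.
Local Open Scope ring_scope.

Definition clip (R : realFieldType) (x lo hi : R) : R := Num.min (Num.max x lo) hi.

Definition in_simplex (R : realFieldType) (A : finType) (p : A -> R) : Prop :=
  (forall a, 0 <= p a) /\ \sum_(a : A) p a = 1.

Definition adv (R : realFieldType) (A : finType) (pi_old r : A -> R) (a : A) : R :=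
  r a - \sum_(b : A) pi_old b * r b.

Definition drift_gspo (R : realFieldType) (A : finType)
  (pi_old r : A -> R) (delta eps : R) (pibar : A -> R) : R :=
  \sum_(a : A) pi_old a *
    (let rho := pibar a / pi_old a in
     rho * adv pi_old r a
     - Num.min (rho * adv pi_old r a / delta)
               (clip rho (1 - eps) (1 + eps) * adv pi_old r a / delta)).

(* For delta = 1 every summand is rho A - min(rho A, clip(rho) A) >= 0.  For
   delta <> 1, move mass u between two actions x, y with r x <> r y; if |u| is
   at most eps times both pi_old x and pi_old y, every ratio stays in
   [1 - eps, 1 + eps], the clip is inactive and the drift collapses to
   (1 - 1/delta) u (r x - r y), whose sign is chosen by the sign of u. *)

From mathcomp Require Import all_boot all_order all_algebra.
From mathcomp Require Import ring lra.
Import Order.TTheory GRing.Theory Num.Theory.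
Local Open Scope ring_scope.

Section GSPODrift.
Context {R : realFieldType} {A : finType}.
Implicit Types (p q r f : A -> R) (u delta eps : R).

Lemma clip_id (x lo hi : R) : lo <= x <= hi -> clip x lo hi = x.
Proof. by case/andP=> lox xhi; rewrite /clip (max_idPl lox) (min_idPl xhi). Qed.

Lemma drift_gspo_delta1_ge0 p r eps q :
  (forall a, 0 <= p a) -> 0 <= drift_gspo p r 1 eps q.
Proof.
move=> p_ge0; rewrite /drift_gspo; apply: sumr_ge0 => a _; apply: mulr_ge0 => //.
by rewrite !divr1 subr_ge0 ge_min lexx.
Qed.

Lemma drift_gspo_unclipped p r delta eps q :
  (forall a, 0 < p a) -> (forall a, (1 - eps) * p a <= q a <= (1 + eps) * p a) ->
  drift_gspo p r delta eps q = (1 - delta^-1) * \sum_a q a * adv p r a.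
Proof.
move=> p_gt0 q_near; rewrite /drift_gspo mulr_sumr; apply: eq_bigr => a _ /=.
have p_neq0 : p a != 0 by rewrite gt_eqF.
rewrite clip_id ?minxx; last by rewrite ler_pdivlMr ?ler_pdivrMr.
(* abstracting [delta^-1] spares [field] a side condition [delta != 0] *)
by move: delta^-1 => d; field.
Qed.

Lemma sum_mul_adv p q r :
  \sum_a q a = 1 -> \sum_a q a * adv p r a = \sum_a q a * r a - \sum_a p a * r a.
Proof.
move=> q1; rewrite /adv.
under eq_bigr => a _ do rewrite mulrBr.
by rewrite sumrB -mulr_suml q1 mul1r.
Qed.

Definition shift p (x y : A) u (a : A) : R := p a + u * ((a == x)%:R - (a == y)%:R).

Lemma sum_indicator_mul (x : A) f : \sum_a (a == x)%:R * f a = f x.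
Proof.
rewrite (bigD1 x) //= eqxx mul1r big1 ?addr0 // => a /negbTE ->.
by rewrite mul0r.
Qed.

Lemma sum_shift_mul p x y u f :
  \sum_a shift p x y u a * f a = \sum_a p a * f a + u * (f x - f y).
Proof.
rewrite /shift.
under eq_bigr => a _ do rewrite mulrDl mulrBr mulrBl -!mulrA.
by rewrite big_split /= sumrB -!mulr_sumr !sum_indicator_mul mulrBr.
Qed.

Lemma shift_near p (x y : A) u eps a :
  x != y -> 0 <= eps -> 0 <= p a ->
  `|u| <= eps * p x -> `|u| <= eps * p y ->
  (1 - eps) * p a <= shift p x y u a <= (1 + eps) * p a.
Proof.
move=> xy eps_ge0 pa_ge0 ux uy; rewrite /shift.
suff : `|u * ((a == x)%:R - (a == y)%:R)| <= eps * p a.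
  by rewrite ler_norml => /andP[? ?]; apply/andP; split; lra.
have [->|_] := eqVneq a x; first by rewrite (negbTE xy) subr0 mulr1.
have [->|_] := eqVneq a y; first by rewrite sub0r mulrN1 normrN.
by rewrite subrr mulr0 normr0 mulr_ge0.
Qed.

Lemma shift_simplex p x y u :
  in_simplex p -> (forall a, 0 <= shift p x y u a) -> in_simplex (shift p x y u).
Proof.
case=> _ p1 shift_ge0; split=> //.
rewrite -(eq_bigr _ (fun a _ => mulr1 (shift p x y u a))) sum_shift_mul.
by under eq_bigr do rewrite mulr1; rewrite subrr mulr0 addr0.
Qed.

Lemma drift_gspo_ge0_iff p r delta eps :
  in_simplex p -> (forall a, 0 < p a) -> (exists a b, r a != r b) ->
  0 < delta -> 0 < eps -> eps < 1 ->
  (forall q, in_simplex q -> 0 <= drift_gspo p r delta eps q) <-> delta = 1.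
Proof.
move=> p_simplex p_gt0 [x [y rxy]] delta_gt0 eps_gt0 eps_lt1.
split=> [drift_ge0|->]; last first.
  by move=> q _; apply: drift_gspo_delta1_ge0 => a; apply: ltW.
apply/eqP; apply: contraT => delta_neq1.
have xy : x != y by apply: contraNneq rxy => ->.
set k := (1 - delta^-1) * (r x - r y).
have k_neq0 : k != 0.
  by rewrite mulf_neq0 ?subr_eq0 // eq_sym invr_eq1.
set m := eps * Num.min (p x) (p y).
have m_gt0 : 0 < m by rewrite mulr_gt0 // lt_min !p_gt0.
pose u := - m * Num.sg k.
have norm_u : `|u| = m by rewrite normrM normrN normr_sg k_neq0 mulr1 gtr0_norm.
have q_near a : (1 - eps) * p a <= shift p x y u a <= (1 + eps) * p a.
  apply: shift_near; rewrite ?norm_u ?ler_pM2l ?ge_min ?lexx ?orbT //;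
    exact: ltW.
have q_simplex : in_simplex (shift p x y u).
  apply: shift_simplex => // a; have /andP[+ _] := q_near a.
  by apply: le_trans; rewrite mulr_ge0 ?subr_ge0 ?ltW.
have drift_q : drift_gspo p r delta eps (shift p x y u) = - (m * `|k|).
  rewrite drift_gspo_unclipped // sum_mul_adv; last by case: q_simplex.
  rewrite sum_shift_mul addrAC subrr add0r normrEsg /k /u; ring.
have := drift_ge0 _ q_simplex.
by rewrite drift_q oppr_ge0 leNgt mulr_gt0 ?normr_gt0.
Qed.

End GSPODrift.

Theorem lemma8 :
  (forall (R : realFieldType) (A : finType) (pi_old r : A -> R) (delta eps : R),
    in_simplex pi_old -> (forall a, 0 < pi_old a) ->
    (exists a b, r a != r b) ->
    0 < delta -> 0 < eps -> eps < 1 ->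
    ((forall pibar : A -> R, in_simplex pibar -> 0 <= drift_gspo pi_old r delta eps pibar)
     <-> delta = 1))
  /\
  (forall (R : realFieldType) (S : Type) (A : finType)
     (pi_old r : S -> A -> R) (delta : S -> R) (eps : R),
    (forall s, in_simplex (pi_old s)) -> (forall s a, 0 < pi_old s a) ->
    (forall s, exists a b, r s a != r s b) ->
    (forall s, 0 < delta s) -> 0 < eps -> eps < 1 ->
    ((forall s (pibar : A -> R), in_simplex pibar ->
        0 <= drift_gspo (pi_old s) (r s) (delta s) eps pibar)
     <-> (forall s, delta s = 1))).
Proof.
split=> [R A p r delta eps|]; first exact: drift_gspo_ge0_iff.
move=> R S A pi_old r delta eps p_simplex p_gt0 r_nonconst delta_gt0 eps_gt0 eps_lt1.
have iff_at s := drift_gspo_ge0_iff (pi_old s) (r s) (delta s) eps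
  (p_simplex s) (p_gt0 s) (r_nonconst s) (delta_gt0 s) eps_gt0 eps_lt1.
by split=> [drift_ge0 s | delta1 s]; apply/iff_at => //; apply: drift_ge0.
Qed.
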